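(* In multihop Peg Duotaire, for every integer $n\ge 1$, the position $1^n$ (a block of $n$ consecutive pegs) has nim-value $0$ if $n\equiv 0$ or $1 \pmod 4$, and nim-value $1$ if $n\equiv 2$ or $3\pmod 4$.
   Context: Peg Duotaire is an impartial two-player game played on the infinite line of sites indexed by $\mathbb{Z}$, each site holding a peg or being a hole, with finitely many pegs. A word $w\in\{0,1\}^*$ denotes the position in which $w$ is written on consecutive sites ($1$ = peg, $0$ = hole) and all other sites are holes. A hop: for a peg at site $i$, a peg at site $i+d$ and a hole at site $i+2d$ ($d=\pm1$), move the peg from $i$ to $i+2d$ and remove the peg at $i+d$. In the multihop version, a move is a sequence of one or more hops all performed by the same peg. Players alternate moves; a player unable to move loses. The nim-value of a position is the least nonnegative integer not among the nim-values of positions reachable in one move. *)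

From HB Require Import structures.
From mathcomp Require Import all_boot all_order all_algebra.
From mathcomp Require Import finmap.
Set Implicit Arguments. Unset Strict Implicit. Unset Printing Implicit Defensive.
Import Order.TTheory GRing.Theory Num.Theory.
Local Open Scope ring_scope.

(* A position: the finite set of sites (in Z) holding a peg. *)
Notation position := {fset int}.

Definition hop (S : position) (i d : int) : bool :=
  ((d == 1) || (d == -1)) && ((i \in S) && ((i + d) \in S) && ((i + 2 * d) \notin S)).

Definition hop_result (S : position) (i d : int) : position :=
  let a := i + 2 * d in let b := i + d in (a |` (S `\` [fset i; b]))%fset.

Inductive chain : position -> int -> position -> int -> Prop :=
| chain_one S i d :
    hop S i d -> chain S i (hop_result S i d) (i + 2 * d)
| chain_step S i d S' j :
    hop S i d -> chain (hop_result S i d) (i + 2 * d) S' j -> chain S i S' j.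

Definition move (S S' : position) : Prop := exists i j, chain S i S' j.

(* nimval S g : the nim-value of S is g, i.e. g = mex of the nim-values
   of the options of S.  (Least fixed point; the game is terminating, so
   this relation is functional and total.) *)
Inductive nimval : position -> nat -> Prop :=
| nimval_mex S g :
    (forall S', move S S' -> exists2 h, nimval S' h & h <> g) ->
    (forall k, (k < g)%N -> exists2 S', move S S' & nimval S' k) ->
    nimval S g.

(* The word 1^n written on the sites 0, 1, ..., n-1. *)
Definition block (n : nat) : position := [fset (Posz k) | k in iota 0 n]%fset.

(* In a block of at least two pegs the only hops take an end peg outward over
   its neighbour, and the landing peg is then two sites away from every other
   peg, so no multihop can continue.  Hence every position reachable from 1^n
   is a block of m = n - 2(j + k) pegs flanked by j and k isolated pegs; its
   options are the two such positions with m - 2 pegs, which have equal value.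
   The nim-value therefore depends only on m, is 0 for m = 0, 1 (no moves) and
   alternates with every step m -> m + 2. *)

From mathcomp Require Import all_boot all_order all_algebra.
From mathcomp Require Import finmap.
From mathcomp Require Import zify.
Set Implicit Arguments. Unset Strict Implicit. Unset Printing Implicit Defensive.
Local Open Scope ring_scope.

Lemma chain_first_hop S i S' l : chain S i S' l -> exists d, hop S i d.
Proof. by case=> [? ? d Hh | ? ? d ? ? Hh _]; exists d. Qed.

Lemma chain_single_hop S i S' l : chain S i S' l ->
  (forall d d', hop S i d -> ~ hop (hop_result S i d) (i + 2 * d) d') ->
  exists2 d, hop S i d & S' = hop_result S i d.
Proof.
case=> [{}S {}i d Hh | {}S {}i d S'' l' Hh Hc] Hstuck; first by exists d.
by have [d' /(Hstuck d d' Hh)] := chain_first_hop Hc.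
Qed.

Lemma hop_move S i d : hop S i d -> move S (hop_result S i d).
Proof. by move=> Hh; exists i, (i + 2 * d); exact: chain_one. Qed.

Lemma nimval_no_move S : (forall S', ~ move S S') -> nimval S 0.
Proof. by move=> Hstuck; apply: nimval_mex => // S' /Hstuck. Qed.

Lemma nimval_uniform_options S S0 g : move S S0 ->
  (forall S', move S S' -> nimval S' g) -> nimval S (g == 0)%N.
Proof.
move=> HS0 Hopt; apply: nimval_mex => [S' /Hopt Hg | h].
  by exists g => //; case: (g).
by case: g Hopt h => [|g] Hopt [|h] //= _; exists S0 => //; exact: Hopt.
Qed.

(* The position reached from 1^n after j hops off its left end and k hops off
   its right end. *)
Definition trimmed_block (n j k : nat) : position :=
  ([fset (2 * t%:Z - 1)%R | t in iota 0 j] `|`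
   [fset (2 * j%:Z + s%:Z)%R | s in iota 0 (n - 2 * j - 2 * k)] `|`
   [fset (n%:Z - 2 * t%:Z)%R | t in iota 0 k])%fset.

Lemma mem_trimmed_block n j k (x : int) :
  (x \in trimmed_block n j k) =
  [|| (-1 <= x <= 2 * j%:Z - 3) && ((x %% 2)%Z == 1),
      (2 * j%:Z <= x) && (x < n%:Z - 2 * k%:Z)
    | (n%:Z - 2 * k%:Z + 2 <= x <= n%:Z) && (((n%:Z - x) %% 2)%Z == 0)].
Proof.
rewrite !inE; apply/idP/idP.
  by case/orP => [/orP[]|] /imfsetP[t /=]; rewrite mem_iota => ? ->; lia.
case/or3P => Hx; apply/orP.
- left; apply/orP; left; apply/imfsetP; exists (absz (x + 1)%R %/ 2)%N => /=.
    by rewrite mem_iota; lia.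
  lia.
- left; apply/orP; right; apply/imfsetP; exists (absz (x - 2 * j%:Z)%R) => /=.
    by rewrite mem_iota; lia.
  lia.
- right; apply/imfsetP; exists (absz (n%:Z - x)%R %/ 2)%N => /=.
    by rewrite mem_iota; lia.
  lia.
Qed.

Lemma hop_trimmed_block n j k i d : (2 * j + 2 * k <= n)%N ->
  hop (trimmed_block n j k) i d ->
  (2 * j + 2 * k + 2 <= n)%N /\
  ((i = 2 * j%:Z + 1 /\ d = -1) \/ (i = n%:Z - 2 - 2 * k%:Z /\ d = 1)).
Proof.
move=> Hjk /andP[/orP[]/eqP-> /andP[/andP[]]]; rewrite !mem_trimmed_block;
  move=> /or3P[]Hi /or3P[]Hid Hland; lia.
Qed.

Lemma hop_left_end n j k : (2 * j + 2 * k + 2 <= n)%N ->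
  hop (trimmed_block n j k) (2 * j%:Z + 1) (-1) /\
  hop_result (trimmed_block n j k) (2 * j%:Z + 1) (-1) = trimmed_block n j.+1 k.
Proof.
move=> Hn; split; first by rewrite /hop !mem_trimmed_block; lia.
apply/fsetP => x; rewrite in_fset1U in_fsetD in_fset2 !mem_trimmed_block; lia.
Qed.

Lemma hop_right_end n j k : (2 * j + 2 * k + 2 <= n)%N ->
  hop (trimmed_block n j k) (n%:Z - 2 - 2 * k%:Z) 1 /\
  hop_result (trimmed_block n j k) (n%:Z - 2 - 2 * k%:Z) 1 = trimmed_block n j k.+1.
Proof.
move=> Hn; split; first by rewrite /hop !mem_trimmed_block; lia.
apply/fsetP => x; rewrite in_fset1U in_fsetD in_fset2 !mem_trimmed_block; lia.
Qed.

Lemma move_trimmed_block n j k S' : (2 * j + 2 * k <= n)%N ->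
  move (trimmed_block n j k) S' ->
  (2 * j + 2 * k + 2 <= n)%N /\
  (S' = trimmed_block n j.+1 k \/ S' = trimmed_block n j k.+1).
Proof.
move=> Hjk [i [l Hc]].
have Hstuck d d' : hop (trimmed_block n j k) i d ->
    ~ hop (hop_result (trimmed_block n j k) i d) (i + 2 * d) d'.
  move=> Hh; have [Hn [[-> ->]|[-> ->]]] := hop_trimmed_block Hjk Hh.
  - by rewrite (hop_left_end Hn).2 => /hop_trimmed_block; lia.
  - by rewrite (hop_right_end Hn).2 => /hop_trimmed_block; lia.
have [d Hh ->] := chain_single_hop Hc Hstuck.
have [Hn [[-> ->]|[-> ->]]] := hop_trimmed_block Hjk Hh.
- by rewrite (hop_left_end Hn).2; auto.
- by rewrite (hop_right_end Hn).2; auto.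
Qed.

Lemma nimval_trimmed_block n j k : (2 * j + 2 * k <= n)%N ->
  nimval (trimmed_block n j k) (odd (n - 2 * j - 2 * k)./2).
Proof.
move Em: (n - 2 * j - 2 * k)%N => m; elim/ltn_ind: m j k Em => m IH j k Em Hjk.
case: m Em IH => [|[|m]] Em IH;
  try by apply: nimval_no_move => S' /(move_trimmed_block Hjk); lia.
have Hn : (2 * j + 2 * k + 2 <= n)%N by lia.
have -> : odd m.+2./2 = (odd m./2 == 0 :> nat) by rewrite /=; case: (odd _).
have [/hop_move + Eleft] := hop_left_end Hn; rewrite Eleft => Hleft.
apply: (nimval_uniform_options Hleft).
move=> S' /(move_trimmed_block Hjk) [_ [->|->]]; apply: IH => //; lia.
Qed.

Lemma trimmed_block00 n : trimmed_block n 0 0 = block n.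
Proof.
apply/fsetP => x; rewrite mem_trimmed_block; apply/idP/imfsetP => [Hx|[t /=]].
  by exists (absz x); rewrite /= ?mem_iota; lia.
by rewrite mem_iota => ? ->; lia.
Qed.

Lemma odd_half_mod4 n :
  odd n./2 = ~~ ((n %% 4 == 0) || (n %% 4 == 1))%N.
Proof. by rewrite -divn2; lia. Qed.

Theorem mainTheorem7 (n : nat) :
  (1 <= n)%N ->
  nimval (block n) (if (n %% 4 == 0)%N || (n %% 4 == 1)%N then 0%N else 1%N).
Proof.
move=> _; have := @nimval_trimmed_block n 0 0 (leq0n n).
rewrite trimmed_block00 !muln0 !subn0 odd_half_mod4.
case: (_ || _); exact: id.
Qed.
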